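(* Let $\mathbb{X}\subseteq\mathbb{P}^2$ be a $\Bbbk$-configuration of type $(1,2,\dots,s)$ with $s\ge2$, defined by subsets $\mathbb{X}_1,\dots,\mathbb{X}_s$ and lines $\mathbb{L}_1,\dots,\mathbb{L}_s$, with $\mathbb{X}_1=\{P\}$ and $\mathbb{X}_2=\{Q_1,Q_2\}$. If $\mathbb{L}$ is a line with $|\mathbb{L}\cap\mathbb{X}|=s$ and $\mathbb{L}\notin\{\mathbb{L}_1,\dots,\mathbb{L}_s\}$, then $\mathbb{L}$ is either the line through $P$ and $Q_1$ or the line through $P$ and $Q_2$.
   Context: $\Bbbk$ is an algebraically closed field. A $\Bbbk$-configuration of type $(d_1,\dots,d_s)$ is a finite set $\mathbb{X}\subseteq\mathbb{P}^2$ for which there exist integers $1\le d_1<\cdots<d_s$, subsets $\mathbb{X}_1,\dots,\mathbb{X}_s$ of $\mathbb{X}$ and distinct lines $\mathbb{L}_1,\dots,\mathbb{L}_s\subseteq\mathbb{P}^2$ such that (1) $\mathbb{X}=\bigcup_{i=1}^s\mathbb{X}_i$; (2) $|\mathbb{X}_i|=d_i$ and $\mathbb{X}_i\subseteq\mathbb{L}_i$ for each $i$; (3) for $1<i\le s$, $\mathbb{L}_i$ contains no point of $\mathbb{X}_j$ for any $j<i$. We say $\mathbb{X}$ is defined by these subsets and lines. *)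

From HB Require Import structures.
From mathcomp Require Import all_boot all_order all_algebra all_field.
Set Implicit Arguments. Unset Strict Implicit. Unset Printing Implicit Defensive.
Import GRing.Theory.
Local Open Scope ring_scope.

(* Homogeneous coordinates in k^3.  A point of P^2 (resp. a line of P^2,
   via its coefficient vector) is represented by its unique NORMALIZED
   representative: a nonzero vector whose first nonzero coordinate is 1.
   Thus Leibniz equality of normalized vectors = equality in P^2. *)
Definition normalized (k : fieldType) (v : 'rV[k]_3) : bool :=
  if v 0 0 != 0 then v 0 0 == 1
  else if v 0 1 != 0 then v 0 1 == 1
  else v 0 2 == 1.

Definition on_line (k : fieldType) (L p : 'rV[k]_3) : bool :=
  \sum_(i < 3) L 0 i * p 0 i == 0.

Definition line_through (k : fieldType) (p q L : 'rV[k]_3) : bool :=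
  on_line L p && on_line L q.

(* X (a duplicate-free list of normalized points) is a k-configuration of
   type (d 1, ..., d s) defined by subsets Xs 1, ..., Xs s and distinct
   lines Ls 1, ..., Ls s (indices 1..s as in the paper). *)
Definition is_kconfig (k : fieldType) (s : nat) (d : nat -> nat)
    (Xs : nat -> seq 'rV[k]_3) (Ls : nat -> 'rV[k]_3) (X : seq 'rV[k]_3) : Prop :=
  [/\ (1 <= s)%N /\ uniq X /\ all (@normalized k) X,
      (forall x, x \in X <-> exists2 i, (1 <= i <= s)%N & x \in Xs i),
      (forall i, (1 <= i <= s)%N ->
         [/\ normalized (Ls i), uniq (Xs i), size (Xs i) = d i
           & all (on_line (Ls i)) (Xs i)]),
      (1 <= d 1)%N /\ (forall i, (1 <= i < s)%N -> (d i < d i.+1)%N)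
    & (forall i j, (1 <= i < j)%N -> (j <= s)%N -> Ls i != Ls j) /\
      (forall i j, (1 <= j < i)%N -> (i <= s)%N ->
         forall x, x \in Xs j -> ~~ on_line (Ls i) x)].

(** Since [X_i] lies on the line [L_i <> L], the line [L] meets each [X_i] in
    at most one point: two distinct points of the plane lie on a unique line,
    because the lines through them form the kernel of a rank-two [3 x 2]
    matrix.  As [X] is covered by [X_1, ..., X_s], the hypothesis
    [|L \cap X| = s] forces [L] to meet every [X_i]; for [i = 1, 2] this
    says that [L] passes through [P] and through [Q1] or [Q2]. *)

From HB Require Import structures.
From mathcomp Require Import all_boot all_order all_algebra all_field.
From mathcomp Require Import zify.

Set Implicit Arguments.
Unset Strict Implicit.
Unset Printing Implicit Defensive.
Import GRing.Theory.
Local Open Scope ring_scope.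

Lemma uniq_size_le1 (T : eqType) (s : seq T) :
  uniq s -> {in s &, forall x y, x = y} -> (size s <= 1)%N.
Proof.
case: s => [|x [|y r]] //= /andP[+ _]; rewrite inE negb_or => /andP[/eqP xy _] eq_s.
by case: xy; apply: eq_s; rewrite !inE eqxx ?orbT.
Qed.

Lemma count_uniq_subset_leq (T : eqType) (a : pred T) (s1 s2 : seq T) :
  uniq s1 -> {subset s1 <= s2} -> (count a s1 <= count a s2)%N.
Proof.
move=> uniq_s1 sub12; rewrite -!size_filter uniq_leq_size ?filter_uniq // => x.
by rewrite !mem_filter => /andP[-> /sub12].
Qed.

Lemma sumn_map_le_size (T : Type) (f : T -> nat) (r : seq T) :
  all (fun i => f i <= 1)%N r -> (sumn (map f r) <= size r)%N.
Proof. by elim: r => //= i r IH /andP[fi_le1 /IH]; lia. Qed.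

Lemma sumn_map_le1_pos (T : Type) (f : T -> nat) (r : seq T) :
  all (fun i => f i <= 1)%N r -> (size r <= sumn (map f r))%N ->
  all (fun i => 0 < f i)%N r.
Proof.
elim: r => //= i r IH /andP[fi_le1 r_le1] full.
have := sumn_map_le_size r_le1; rewrite IH ?andbT //; lia.
Qed.

Section ProjectivePlane.
Variable k : fieldType.
Implicit Types u v x y L M : 'rV[k]_3.

Lemma normalized_neq0 v : normalized v -> v != 0.
Proof. by apply: contraTneq => ->; rewrite /normalized !mxE eqxx /= eq_sym oner_eq0. Qed.

Lemma normalized_sub_eq u v : normalized u -> normalized v -> (u <= v)%MS -> u = v.
Proof.
move=> nu nv /sub_rVP[c def_u]; rewrite def_u in nu *.
have [c0 | nz_c] := eqVneq c 0.
  by move: nu; rewrite c0 scale0r => /normalized_neq0; rewrite eqxx.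
suff /eqP -> : c == 1 by rewrite scale1r.
move: nu nv; rewrite /normalized !mxE !mulf_eq0 (negbTE nz_c) /=.
by case: (v 0 0 != 0); last case: (v 0 1 != 0); move=> + /eqP v1; rewrite v1 mulr1.
Qed.

Lemma rank_col_mx_normalized x y :
  normalized x -> normalized y -> x != y -> \rank (col_mx x y) = 2%N.
Proof.
move=> nx ny; apply: contraNeq => rk_neq2; apply/eqP/esym/normalized_sub_eq => //.
have sub_x : (x <= col_mx x y)%MS by rewrite -addsmxE addsmxSl.
have : (\rank (col_mx x y) <= \rank x)%N.
  rewrite rank_rV normalized_neq0 //.
  by move: rk_neq2 (rank_leq_row (col_mx x y)); case: (\rank _) => [|[|[|]]].
by rewrite (geq_leqif (mxrank_leqif_sup sub_x)) -addsmxE addsmx_sub => /andP[].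
Qed.

Lemma on_lineE L p : on_line L p = (L *m p^T == 0).
Proof.
have -> : (L *m p^T == 0) = ((L *m p^T) 0 0 == 0).
  by apply/eqP/eqP => [-> | A00]; [rewrite mxE | apply/rowP => i; rewrite ord1 A00 mxE].
by rewrite /on_line mxE; congr (_ == 0); apply: eq_bigr => j _; rewrite mxE.
Qed.

Lemma line_through_kermxE x y L :
  line_through x y L = (L <= kermx (col_mx x y)^T)%MS.
Proof. by rewrite sub_kermx tr_col_mx mul_mx_row row_mx_eq0 -!on_lineE. Qed.

Lemma line_through2_unique x y L M :
  normalized x -> normalized y -> x != y -> normalized L -> normalized M ->
  line_through x y L -> line_through x y M -> L = M.
Proof.
move=> nx ny xy nL nM; rewrite !line_through_kermxE => L_ker M_ker.
have rk_ker : \rank (kermx (col_mx x y)^T) = 1%N.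
  by rewrite mxrank_ker mxrank_tr rank_col_mx_normalized.
have rk_L : \rank L = \rank (kermx (col_mx x y)^T).
  by rewrite rk_ker rank_rV normalized_neq0.
apply/esym/normalized_sub_eq => //; apply: submx_trans M_ker _.
by rewrite -(geq_leqif (mxrank_leqif_sup L_ker)) rk_L.
Qed.

Lemma count_on_line_le1 L M (S : seq 'rV[k]_3) :
  normalized L -> normalized M -> L != M -> uniq S -> all (@normalized k) S ->
  all (on_line M) S -> (count (on_line L) S <= 1)%N.
Proof.
move=> nL nM LM uS /allP nS /allP MS; rewrite -size_filter.
apply: uniq_size_le1; first exact: filter_uniq.
move=> x y; rewrite !mem_filter => /andP[Lx xS] /andP[Ly yS].
apply/eqP; apply: contraNT LM => xy; apply/eqP.
by apply: (line_through2_unique (nS x xS) (nS y yS)); rewrite // /line_through ?Lx ?Ly ?MS.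
Qed.

End ProjectivePlane.

Theorem lemma2p7 (k : closedFieldType) (s : nat)
    (Xs : nat -> seq 'rV[k]_3) (Ls : nat -> 'rV[k]_3) (X : seq 'rV[k]_3)
    (P Q1 Q2 L : 'rV[k]_3) :
  (2 <= s)%N ->
  is_kconfig s (fun i => i) Xs Ls X ->
  Xs 1%N = [:: P] ->
  Xs 2%N =i [:: Q1; Q2] ->
  normalized L ->
  count (on_line L) X = s ->
  (forall i, (1 <= i <= s)%N -> L != Ls i) ->
  line_through P Q1 L || line_through P Q2 L.
Proof.
move=> s_ge2 [[_ [uX /allP nX]] memX Xs_on_Ls _ _] X1 X2 nL cntX L_new.
pose meets i := count (on_line L) (Xs i).
have X_sub : {subset X <= flatten (map Xs (iota 1 s))}.
  move=> x /memX[i i_s xi]; apply/flattenP; exists (Xs i) => //.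
  by apply: map_f; rewrite mem_iota add1n ltnS.
have meets_le1 : all (fun i => meets i <= 1)%N (iota 1 s).
  apply/allP => i; rewrite mem_iota add1n ltnS => i_s.
  have [nLi uXi _ XiLi] := Xs_on_Ls i i_s.
  apply: (count_on_line_le1 nL nLi (L_new i i_s) uXi _ XiLi).
  by apply/allP => x xi; apply: nX; apply/memX; exists i.
have /allP meets_pos : all (fun i => 0 < meets i)%N (iota 1 s).
  apply: sumn_map_le1_pos meets_le1 _; rewrite size_iota -{1}cntX map_comp -count_flatten.
  exact: count_uniq_subset_leq.
have /meets_pos : 1%N \in iota 1 s by rewrite mem_iota; lia.
rewrite /meets X1 /= addn0 lt0b => LP.
have /meets_pos : 2%N \in iota 1 s by rewrite mem_iota; lia.
rewrite /meets -has_count => /hasP[q].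
by rewrite X2 !inE => /orP[] /eqP-> Lq; rewrite /line_through LP Lq ?orbT.
Qed.
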